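(* Let $(\mathsf{K},d)$ be a compact metric space and let $\mathsf{S}_1\supseteq\mathsf{S}_2\supseteq\dots\supseteq\mathsf{S}_T$ be nonempty subsets of $\mathsf{K}$ such that $d_H(\mathsf{S}_i,\mathsf{S}_j)>\varepsilon$ for all $i\ne j$. Then $T\le N(\mathsf{K},\varepsilon)$.
   Context: $d_H$ is the Hausdorff distance induced by $d$. $N(\mathsf{K},r)$ is the $r$-packing number: the maximal $n$ such that there exist $\theta_1,\dots,\theta_n\in\mathsf{K}$ with $d(\theta_i,\theta_j)>r$ for all $i\ne j$. *)

From HB Require Import structures.
From mathcomp Require Import all_boot all_order all_algebra.
From mathcomp Require Import all_classical all_reals all_analysis.
Set Implicit Arguments. Unset Strict Implicit. Unset Printing Implicit Defensive.
Import Order.TTheory GRing.Theory Num.Theory.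
Local Open Scope classical_set_scope.
Local Open Scope ring_scope.

Definition hausdorff_dist {R : realType} {M : metricType R} (A B : set M) : \bar R :=
  Order.max
    (ereal_sup [set ereal_inf [set (mdist a b)%:E | b in B] | a in A])
    (ereal_sup [set ereal_inf [set (mdist a b)%:E | a in A] | b in B]).

Definition has_packing {R : realType} {M : metricType R} (K : set M) (r : R) (n : nat) : Prop :=
  exists f : 'I_n -> M, (forall i, K (f i)) /\
    (forall i j : 'I_n, i != j -> r < mdist (f i) (f j)).

Definition is_packing_number {R : realType} {M : metricType R} (K : set M) (r : R) (N : nat) : Prop :=
  has_packing K r N /\ (forall n, has_packing K r n -> (n <= N)%N).

From HB Require Import structures.
From mathcomp Require Import all_boot all_order all_algebra.
From mathcomp Require Import all_classical all_reals all_analysis.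
Import Order.TTheory GRing.Theory Num.Theory.
Local Open Scope classical_set_scope.
Local Open Scope ring_scope.

(* Since S_(i+1) is contained in S_i, d_H(S_i, S_(i+1)) > eps yields a point
   a_i of S_i at distance > eps from all of S_(i+1), hence from every later
   S_j and in particular from a_j.  The points a_0, ..., a_(T-1) thus form an
   eps-packing of K of size T. *)

Section Packing.
Variables (R : realType) (M : metricType R).

Lemma hausdorff_dist_gt_far_point (eps : R) (A B : set M) :
  B `<=` A -> A !=set0 -> (eps%:E < hausdorff_dist A B)%E ->
  exists2 a, A a & forall b, B b -> eps < mdist a b.
Proof.
move=> BA [a0 Aa0]; rewrite /hausdorff_dist lt_max => /orP[].
- move=> /ereal_sup_gt [_ [a Aa <-] eps_lt_inf]; exists a => // b Bb.
  rewrite -lte_fin; apply: (lt_le_trans eps_lt_inf).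
  by apply: ereal_inf_lbound; exists b.
- (* as B is inside A, this half of d_H is 0, so eps < 0 and any point works *)
  move=> /ereal_sup_gt [_ [b Bb <-] eps_lt_inf].
  have inf_le0 : (ereal_inf [set (mdist a b)%:E | a in A] <= 0%:E)%E.
    by apply: ereal_inf_lbound; exists b; [exact: BA | rewrite mdistxx].
  have eps_lt0 : eps < 0 by rewrite -lte_fin (lt_le_trans eps_lt_inf inf_le0).
  by exists a0 => // b' _; apply: lt_le_trans eps_lt0 (mdist_ge0 _ _).
Qed.

Lemma has_packing_ord_lt (K : set M) (r : R) (n : nat) (f : 'I_n -> M) :
  (forall i, K (f i)) ->
  (forall i j : 'I_n, (i < j)%N -> r < mdist (f i) (f j)) ->
  has_packing K r n.
Proof.
move=> Kf f_sep; exists f; split=> // i j; rewrite neq_ltn => /orP[ij | ji].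
  exact: f_sep.
by rewrite metric_sym; apply: f_sep.
Qed.

End Packing.

Arguments hausdorff_dist_gt_far_point {R M eps A B}.
Arguments has_packing_ord_lt {R M K r n}.

Theorem lemma2 (R : realType) (M : metricType R) (K : set M) (eps : R)
  (T : nat) (S : nat -> set M) (N : nat) :
  compact K ->
  (forall i, (i < T)%N -> S i `<=` K) ->
  (forall i, (i < T)%N -> S i !=set0) ->
  (forall i j, (i <= j)%N -> (j < T)%N -> S j `<=` S i) ->
  (forall i j, (i < T)%N -> (j < T)%N -> i <> j ->
     (eps%:E < hausdorff_dist (S i) (S j))%E) ->
  is_packing_number K eps N ->
  (T <= N)%N.
Proof.
(* compactness only serves to make N finite, which is assumed here *)
move=> _ SK S_neq0 S_nested S_far [_ N_max]; apply: N_max.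
have far_point (i : 'I_T) : exists a, S i a /\
    ((i.+1 < T)%N -> forall b, S i.+1 b -> eps < mdist a b).
  have [iST | ] := ltnP i.+1 T; last first.
    by have [a Sa] := S_neq0 _ (ltn_ord i); exists a.
  have [a Sa a_far] := hausdorff_dist_gt_far_point (S_nested _ _ (leqnSn i) iST)
    (S_neq0 _ (ltn_ord i)) (S_far _ _ (ltn_ord i) iST (@n_Sn i)).
  by exists a.
have [f f_far] := boolp.choice far_point.
apply: (has_packing_ord_lt f) => [i | i j ij].
  by apply: (SK _ (ltn_ord i)); case: (f_far i).
apply: (f_far i).2; first exact: leq_ltn_trans ij (ltn_ord j).
exact: S_nested ij (ltn_ord j) _ (f_far j).1.
Qed.
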